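(* Let $n\ge2$ be an integer, $x>0$ and $\alpha\in\mathbb{R}$. Then $\det A_{n;3}(x,x^\alpha)=\det A_{n;3}(x,x^{1-\alpha})$, $p_n(x,x^\alpha)=p_n(x,x^{1-\alpha})$ and $q_n(x,x^\alpha)=q_n(x,x^{1-\alpha})$.
   Context: For an integer $n\ge 2$ and $y\ge0$, $y\neq 1$, let $k_n(y)=\frac1n\sum_{l=1}^{n}\frac{1-y\cos(2\pi l/n)}{(1+y^2-2y\cos(2\pi l/n))^{3/2}}-1$, and set $k_n(1)=\delta_n:=\frac{1}{4n}\sum_{l=1}^{n-1}\frac{1}{\sin(\pi l/n)}-1$. For $x_1,x_2>0$ define $A_{n;3}(x_1,x_2)=\begin{pmatrix}\delta_n&k_n(x_2/x_1)&k_n(1/x_1)\\ k_n(x_1/x_2)&\delta_n&k_n(1/x_2)\\ k_n(x_1)&k_n(x_2)&\delta_n\end{pmatrix}$, $p_n(x_1,x_2)=-k_n(x_1)k_n(1/x_1)-k_n(x_2)k_n(1/x_2)-k_n(x_1/x_2)k_n(x_2/x_1)$ and $q_n(x_1,x_2)=k_n(x_1)k_n(1/x_2)k_n(x_2/x_1)+k_n(x_2)k_n(1/x_1)k_n(x_1/x_2)$, so that $\det A_{n;3}=\delta_n^3+p_n\delta_n+q_n$. *)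

From Stdlib Require Import Reals.
Open Scope R_scope.

Fixpoint sum_from_1 (f : nat -> R) (m : nat) : R :=
  match m with
  | O => 0
  | S m' => sum_from_1 f m' + f (S m')
  end.

Definition delta (n : nat) : R :=
  / (4 * INR n) * sum_from_1 (fun l => / sin (PI * INR l / INR n)) (n - 1) - 1.

Definition kn (n : nat) (y : R) : R :=
  if Req_EM_T y 1 then delta n
  else / INR n * sum_from_1 (fun l =>
         (1 - y * cos (2 * PI * INR l / INR n)) /
         Rpower (1 + y ^ 2 - 2 * y * cos (2 * PI * INR l / INR n)) (3 / 2)) n - 1.

(* The matrix A_{n;3}(x1,x2), entries indexed by 0,1,2 *)
Definition A3 (n : nat) (x1 x2 : R) (i j : nat) : R :=
  match i, j with
  | 0, 0 => delta n | 0, 1 => kn n (x2 / x1) | 0, _ => kn n (1 / x1)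
  | 1, 0 => kn n (x1 / x2) | 1, 1 => delta n | 1, _ => kn n (1 / x2)
  | _, 0 => kn n x1 | _, 1 => kn n x2 | _, _ => delta n
  end.

Definition det3 (M : nat -> nat -> R) : R :=
  M 0%nat 0%nat * M 1%nat 1%nat * M 2%nat 2%nat
  + M 0%nat 1%nat * M 1%nat 2%nat * M 2%nat 0%nat
  + M 0%nat 2%nat * M 1%nat 0%nat * M 2%nat 1%nat
  - M 0%nat 2%nat * M 1%nat 1%nat * M 2%nat 0%nat
  - M 0%nat 0%nat * M 1%nat 2%nat * M 2%nat 1%nat
  - M 0%nat 1%nat * M 1%nat 0%nat * M 2%nat 2%nat.

Definition pn (n : nat) (x1 x2 : R) : R :=
  - kn n x1 * kn n (1 / x1) - kn n x2 * kn n (1 / x2)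
  - kn n (x1 / x2) * kn n (x2 / x1).

Definition qn (n : nat) (x1 x2 : R) : R :=
  kn n x1 * kn n (1 / x2) * kn n (x2 / x1)
  + kn n x2 * kn n (1 / x1) * kn n (x1 / x2).

From Stdlib Require Import Reals Lra.
Open Scope R_scope.

(* Since x^(1-a) = x / x^a, it suffices that substituting x2 := x1/x2 leaves
   det A, p and q unchanged. This substitution merely permutes the six
   arguments x1, 1/x1, x2, 1/x2, x1/x2, x2/x1 of k_n (exchanging x2 with x1/x2
   and 1/x2 with x2/x1), and the three expressions are invariant under that
   permutation; no property of k_n itself is needed. *)

Lemma Rpower_1_minus (x a : R) : 0 < x -> Rpower x (1 - a) = x / Rpower x a.
Proof.
  intros Hx. unfold Rminus.
  rewrite Rpower_plus, Rpower_1, Rpower_Ropp by exact Hx.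
  reflexivity.
Qed.

Lemma div_div_args (x1 x2 : R) : x1 <> 0 -> x2 <> 0 ->
  x1 / (x1 / x2) = x2 /\ (x1 / x2) / x1 = 1 / x2 /\ 1 / (x1 / x2) = x2 / x1.
Proof. intros H1 H2. repeat split; field; auto. Qed.

Lemma det3_A3_div (n : nat) (x1 x2 : R) : x1 <> 0 -> x2 <> 0 ->
  det3 (A3 n x1 (x1 / x2)) = det3 (A3 n x1 x2).
Proof.
  intros H1 H2. destruct (div_div_args x1 x2 H1 H2) as [E1 [E2 E3]].
  unfold det3, A3. rewrite E1, E2, E3. ring.
Qed.

Lemma pn_div (n : nat) (x1 x2 : R) : x1 <> 0 -> x2 <> 0 ->
  pn n x1 (x1 / x2) = pn n x1 x2.
Proof.
  intros H1 H2. destruct (div_div_args x1 x2 H1 H2) as [E1 [E2 E3]].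
  unfold pn. rewrite E1, E2, E3. ring.
Qed.

Lemma qn_div (n : nat) (x1 x2 : R) : x1 <> 0 -> x2 <> 0 ->
  qn n x1 (x1 / x2) = qn n x1 x2.
Proof.
  intros H1 H2. destruct (div_div_args x1 x2 H1 H2) as [E1 [E2 E3]].
  unfold qn. rewrite E1, E2, E3. ring.
Qed.

Theorem lemma3 (n : nat) (x alpha : R) :
  (2 <= n)%nat -> 0 < x ->
  det3 (A3 n x (Rpower x alpha)) = det3 (A3 n x (Rpower x (1 - alpha))) /\
  pn n x (Rpower x alpha) = pn n x (Rpower x (1 - alpha)) /\
  qn n x (Rpower x alpha) = qn n x (Rpower x (1 - alpha)).
Proof.
  intros _ Hx.
  assert (Hy : Rpower x alpha <> 0) by (apply Rgt_not_eq, exp_pos).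
  assert (Hx0 : x <> 0) by lra.
  rewrite (Rpower_1_minus x alpha Hx).
  rewrite det3_A3_div, pn_div, qn_div by assumption.
  repeat split.
Qed.
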